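(* Let $\Pi_q$ be a projective plane (not necessarily Desarguesian) of order $q\ge 2$. Let $c\ge 1$ be a real number and let $k$ be an integer such that \[ 2c\sqrt{(q+1)\ln (q+1)}+2\le k<\frac{q^{2}-1}{q+2}. \] Then a point set of size $k$ chosen uniformly at random among all $k$-subsets of the point set of $\Pi_q$ is a saturating set with probability greater than \[ 1-\frac{1}{(q+1)^{2c^{2}-2}}. \]
   Context: A point set $S\subset \Pi_q$ is saturating if every point of $\Pi_q\setminus S$ is collinear with two points of $S$. Here $\ln$ denotes the natural logarithm. *)

From mathcomp Require Import all_boot.
From Stdlib Require Import Reals.
Set Implicit Arguments. Unset Strict Implicit. Unset Printing Implicit Defensive.

Section ProjPlane.
Variables (P L : finType) (inc : P -> L -> bool).

Definition projective_plane : Prop :=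
  (forall x y : P, x != y -> exists! l : L, inc x l && inc y l) /\
  (forall l m : L, l != m -> exists! x : P, inc x l && inc x m) /\
  (exists a b c d : P,
     uniq [:: a; b; c; d] /\
     forall (l : L), ~~ [|| [&& inc a l, inc b l & inc c l],
                            [&& inc a l, inc b l & inc d l],
                            [&& inc a l, inc c l & inc d l]
                          | [&& inc b l, inc c l & inc d l]]).

Definition plane_order (q : nat) : Prop :=
  forall l : L, #|[set x : P | inc x l]| = q.+1.

Definition collinear (x y z : P) : bool :=
  [exists l : L, [&& inc x l, inc y l & inc z l]].

Definition saturating (S : {set P}) : bool :=
  [forall p, (p \notin S) ==>
     [exists x in S, exists y in S, (x != y) && collinear p x y]].
End ProjPlane.

From mathcomp Require Import all_boot.
From Stdlib Require Import Reals Lra Psatz.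
Set Implicit Arguments. Unset Strict Implicit. Unset Printing Implicit Defensive.

(* A point p outside a k-set S is not saturated by S exactly when the k lines
   joining p to the points of S are distinct. Recording the point of S on each
   line through p embeds such sets into partial choice functions on k of the
   q + 1 lines of the pencil at p, so there are at most C(q+1, k) q^k of them, and
   a union bound over the N = q^2 + q + 1 points counts the non-saturating k-sets.
   The ratio C(q+1, k) q^k / C(N, k) is the product over i < k of
   (q + 1 - i) q / (N - i) <= exp (-(1 + i (q - 1)) / N), and the lower bound on k
   makes N times this product smaller than (q + 1)^(2 - 2 c^2). *)

Lemma card_bigcup_leq (I T : finType) (A : {pred I}) (F : I -> {set T}) :
  #|\bigcup_(i in A) F i| <= \sum_(i in A) #|F i|.
Proof.
elim/big_rec2: _ => [|i n U _ le]; first by rewrite cards0.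
by apply: leq_trans (leq_card_setU _ _).1 _; rewrite leq_add2l.
Qed.

Lemma card_set_unique (T : finType) (A : pred T) :
  (exists! x, A x) -> #|[set x | A x]| = 1.
Proof.
move=> [x [Ax U]]; apply: (eq_card1 (x := x)) => y; rewrite inE.
by apply/idP/eqP => [/U <-|->].
Qed.

Section LinearSpace.
Variables (P L : finType) (inc : P -> L -> bool).
Hypothesis join_uniq : forall x y : P, x != y -> exists! l : L, inc x l && inc y l.
Variable q : nat.
Hypothesis hord : plane_order inc q.

Definition pencil (p : P) : {set L} := [set l | inc p l].

Lemma eq_line_of_two x y l m :
  x != y -> inc x l -> inc y l -> inc x m -> inc y m -> l = m.
Proof.
move=> /join_uniq [l0 [_ U]] xl yl xm ym.
by rewrite -(U l) ?xl ?yl // -(U m) ?xm ?ym.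
Qed.

Lemma card_line_minus p l : inc p l -> #|[set x | inc x l & x != p]| = q.
Proof.
move=> pl; have := hord l; rewrite (cardsD1 p) inE pl add1n => [[<-]].
by apply: eq_card => x; rewrite !inE andbC.
Qed.

Lemma card_points_pencil p : #|P| = (q * #|pencil p|).+1.
Proof.
rewrite -cardsT (cardsD1 p) inE add1n; congr _.+1.
have -> : #|[set: P] :\ p| = \sum_(x | x != p) \sum_(l | inc p l && inc x l) 1.
  rewrite -sum1_card; apply: eq_big => [x|x]; first by rewrite !inE andbT.
  rewrite !inE andbT => xp; rewrite sum1dep_card -(card_set_unique (join_uniq xp)).
  by apply: eq_card => l; rewrite !inE andbC.
rewrite (exchange_big_dep (inc p)) /=; last by move=> x l _ /andP [].
rewrite mulnC -sum_nat_const; apply: eq_big => [l|l pl]; first by rewrite inE.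
rewrite sum1dep_card -(card_line_minus pl).
by apply: eq_card => x; rewrite !inE pl andbC.
Qed.

Definition uncovered (k : nat) (p : P) : {set {set P}} :=
  [set S : {set P} | [&& #|S| == k, p \notin S &
     ~~ [exists x in S, exists y in S, (x != y) && collinear inc p x y]]].

Lemma uncovered_line k p S x y l : S \in uncovered k p -> x \in S -> y \in S ->
  inc p l -> inc x l -> inc y l -> x = y.
Proof.
rewrite inE => /and3P [_ _ /negP noxy] xS yS pl xl yl.
apply/eqP/negPn/negP => xy; apply: noxy.
apply/exists_inP; exists x => //; apply/exists_inP; exists y; rewrite // xy.
by apply/existsP; exists l; rewrite pl xl yl.
Qed.

(* [p] plays the role of "no point": on lines missing [p] and on lines through [p]
   that miss [S]. *)
Definition pencil_choice (p : P) (S : {set P}) : {ffun L -> P} :=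
  [ffun l => if inc p l then odflt p [pick x in S | inc x l] else p].

Lemma pencil_choice_neq p S l : pencil_choice p S l != p ->
  [/\ inc p l, pencil_choice p S l \in S & inc (pencil_choice p S l) l].
Proof.
rewrite ffunE; case: ifP => pl; last by rewrite eqxx.
by case: pickP => [x /andP [xS xl]|_] /=; rewrite ?eqxx.
Qed.

Lemma pencil_choiceE k p S x l : S \in uncovered k p -> x \in S ->
  inc p l -> inc x l -> pencil_choice p S l = x.
Proof.
move=> Sp xS pl xl; rewrite ffunE pl.
case: pickP => [y /andP [yS yl]|/(_ x)] /=; last by rewrite xS xl.
exact: uncovered_line Sp yS xS pl yl xl.
Qed.

Lemma nonsaturating_uncovered S : ~~ saturating inc S -> exists p, S \in uncovered #|S| p.
Proof.
case/forallPn => p; rewrite negb_imply => /andP [pS noxy].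
by exists p; rewrite inE eqxx pS.
Qed.

Section Uncovered.
Variables (k : nat) (p : P) (S : {set P}).
Hypothesis Sp : S \in uncovered k p.
Let f := pencil_choice p S.
Let T := [set l | f l != p].

Lemma notin_uncovered : p \notin S.
Proof. by move: Sp; rewrite inE => /and3P []. Qed.

Lemma pencil_choice_image : f @: T = S.
Proof.
apply/setP => x; apply/imsetP/idP => [[l] | xS].
  by rewrite inE => /pencil_choice_neq [_ ? _] ->.
have xp : x != p by apply: contraNneq notin_uncovered => <-.
have [l [/andP [xl pl] _]] := join_uniq xp.
by exists l; rewrite ?inE /f (pencil_choiceE Sp xS pl xl).
Qed.

Lemma card_pencil_choice_support : #|T| = k.
Proof.
move: Sp; rewrite inE => /and3P [/eqP <- _ _]; rewrite -pencil_choice_image.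
apply/esym/card_in_imset => l m; rewrite !inE => lT mT flm.
have [pl _ xl] := pencil_choice_neq lT; have [pm _ xm] := pencil_choice_neq mT.
by apply: (eq_line_of_two lT xl pl); rewrite // flm.
Qed.

Lemma pencil_choice_pfamily :
  f \in pfamily p T (fun l => [pred x | inc x l & x != p]).
Proof.
apply/pfamilyP; split; first by apply/subsetP => l; rewrite !inE.
by move=> l; rewrite inE => lT; have [_ _ xl] := pencil_choice_neq lT; rewrite !inE xl.
Qed.

End Uncovered.

Lemma card_uncovered k p : #|uncovered k p| <= 'C(#|pencil p|, k) * expn q k.
Proof.
pose F l := [pred x | inc x l & x != p].
pose draws := [set T : {set L} | T \subset pencil p & #|T| == k].
have inj : {in uncovered k p &, injective (pencil_choice p)}.
  move=> S1 S2 S1p S2p e.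
  by rewrite -(pencil_choice_image S1p) -(pencil_choice_image S2p) e.
rewrite -(card_in_imset inj).
have sub : pencil_choice p @: uncovered k p \subset
           \bigcup_(T in draws) [set f in pfamily p T F].
  apply/subsetP => _ /imsetP [S Sp ->]; apply/bigcupP.
  exists [set l | pencil_choice p S l != p]; last by rewrite inE pencil_choice_pfamily.
  rewrite inE (card_pencil_choice_support Sp) eqxx andbT.
  by apply/subsetP => l; rewrite !inE => /pencil_choice_neq [].
apply: leq_trans (subset_leq_card sub) _; apply: leq_trans (card_bigcup_leq _ _) _.
rewrite -cards_draws -sum_nat_const; apply: leq_sum => T.
rewrite inE => /andP [sT /eqP <-]; rewrite cardsE card_pfamily foldrE big_map big_enum /=.
rewrite -prod_nat_const; apply/eq_leq/eq_bigr => l /(subsetP sT); rewrite inE => pl.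
by rewrite -(card_line_minus pl); apply: eq_card => x; rewrite !inE.
Qed.

End LinearSpace.

Section ProjectivePlane.
Variables (P L : finType) (inc : P -> L -> bool).
Hypothesis hpp : projective_plane inc.
Variable q : nat.
Hypothesis hord : plane_order inc q.

Let join_uniq := proj1 hpp.
Let meet_uniq := proj1 (proj2 hpp).

Lemma card_pencil_off p l : ~~ inc p l -> #|pencil inc p| = q.+1.
Proof.
move=> pl; rewrite -(hord l).
transitivity (\sum_(m | inc p m) \sum_(x | inc x m && inc x l) 1).
  rewrite -sum1dep_card; apply: eq_bigr => m pm; rewrite sum1dep_card.
  by apply/esym/card_set_unique/meet_uniq; apply: contraNneq pl => <-.
rewrite (exchange_big_dep (fun x => inc x l)) /=; last by move=> m x _ /andP [].
rewrite -sum1dep_card; apply: eq_bigr => x xl.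
have xp : x != p by apply: contraNneq pl => <-.
rewrite sum1dep_card -(card_set_unique (join_uniq xp)).
by apply: eq_card => m; rewrite !inE xl andbT andbC.
Qed.

Lemma exists_antiflag : exists (p : P) (l : L), ~~ inc p l.
Proof.
case: hpp => _ [_ [a [b [c [d [abcd noline]]]]]].
have ab : a != b by move: abcd; rewrite /= !inE; case: (a == b).
have [l [/andP [al bl] _]] := join_uniq ab.
by exists c, l; apply/negP => cl; move: (noline l); rewrite al bl cl.
Qed.

Lemma card_points :
  0 < q -> #|P| = (q * q.+1).+1 /\ forall p, #|pencil inc p| = q.+1.
Proof.
move=> q_gt0; have [p0 [l0 p0l0]] := exists_antiflag.
have NP : #|P| = (q * q.+1).+1.
  by rewrite (card_points_pencil join_uniq hord p0) (card_pencil_off p0l0).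
split=> // p; apply/eqP; rewrite -(eqn_pmul2l q_gt0) -eqSS -NP.
by rewrite (card_points_pencil join_uniq hord p).
Qed.

Lemma card_saturating_ge k : 0 < q ->
  'C(#|P|, k) <= #|[set S : {set P} | (#|S| == k) && saturating inc S]|
                 + #|P| * ('C(q.+1, k) * expn q k).
Proof.
move=> q_gt0; have [_ card_pencil] := card_points q_gt0.
rewrite -card_draws -(cardsID [set S | saturating inc S]); apply: leq_add.
  by apply: subset_leq_card; apply/subsetP => S; rewrite !inE.
have sub : [set S : {set P} | #|S| == k] :\: [set S | saturating inc S] \subset
           \bigcup_p uncovered inc k p.
  apply/subsetP => S; rewrite !inE => /andP [nsat /eqP <-]; apply/bigcupP.
  by have [p Sp] := nonsaturating_uncovered nsat; exists p.
apply: leq_trans (subset_leq_card sub) _; apply: leq_trans (card_bigcup_leq _ _) _.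
rewrite -sum_nat_const; apply: leq_sum => p _.
by rewrite -(card_pencil p); apply: (card_uncovered join_uniq hord).
Qed.

End ProjectivePlane.

Section RealBounds.
Local Open Scope R_scope.

(* [decay q j = sum_(i < j) (1 + i (q - 1))] *)
Definition decay (q j : R) := j + (q - 1) * j * (j - 1) / 2.

Lemma INR_subn m n : (n <= m)%nat -> INR (m - n) = INR m - INR n.
Proof. by move=> /leP nm; rewrite -minusE minus_INR. Qed.

Lemma exp_le x y : x <= y -> exp x <= exp y.
Proof. by case/Rle_lt_or_eq_dec => [/exp_increasing/Rlt_le | ->]; [| apply: Rle_refl]. Qed.

Lemma ratio_step_le (q j : R) : 1 <= q -> 0 <= j <= q ->
  (q + 1 - j) * q <= exp (- (1 + j * (q - 1)) / (q * (q + 1) + 1)) * (q * (q + 1) + 1 - j).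
Proof.
move=> hq hj; set N := q * (q + 1) + 1; set t := 1 + j * (q - 1).
have hN : 0 < N by rewrite /N; nra.
have ht : 0 <= t by rewrite /t; nra.
have hNj : 0 <= N - j by rewrite /N; nra.
have hexp : (1 - t / N) * (N - j) <= exp (- t / N) * (N - j).
  apply: Rmult_le_compat_r => //; have := exp_ineq1_le (- t / N); lra.
have -> : (q + 1 - j) * q = N - j - t by rewrite /N /t; ring.
rewrite (_ : (1 - t / N) * (N - j) = N - j - t + t * j / N) in hexp; last by field; lra.
have : 0 <= t * j / N by apply: Rmult_le_pos; [nra | apply/Rlt_le/Rinv_0_lt_compat].
lra.
Qed.

Lemma ffact_ratio_le (q j : nat) : (1 <= q)%nat -> (j <= q.+1)%nat ->
  INR (q.+1 ^_ j * expn q j) <=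
  exp (- decay (INR q) (INR j) / (INR q * (INR q + 1) + 1)) * INR ((q * q.+1).+1 ^_ j).
Proof.
set N := INR q * (INR q + 1) + 1 => q_ge1; elim: j => [|j IH] jq.
  have -> : decay (INR q) (INR 0) = 0 by rewrite /decay /=; field.
  by rewrite Ropp_0 Rdiv_0_l exp_0 /=; lra.
have hq : 1 <= INR q by apply: (le_INR 1); apply/leP.
have hj : 0 <= INR j <= INR q by split; [apply: pos_INR | apply/le_INR/leP].
have eN : INR (q * q.+1).+1 = N by rewrite S_INR mult_INR S_INR.
rewrite ffactnSr (ffactnSr (q * q.+1).+1) expnSr mulnACA !mult_INR.
rewrite INR_subn 1?ltnW // INR_subn ?eN; last by rewrite (leq_trans (ltnW jq)) // ltnS leq_pmulr.
have -> : decay (INR q) (INR j.+1) = decay (INR q) (INR j) + (1 + INR j * (INR q - 1)).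
  by rewrite /decay S_INR; field.
rewrite Ropp_plus_distr Rdiv_plus_distr exp_plus S_INR.
set E := exp (- decay _ _ / N); set F := INR ((q * q.+1).+1 ^_ j).
rewrite (_ : E * _ * (F * _) = (E * F) * (exp (- (1 + INR j * (INR q - 1)) / N) * (N - INR j)));
  last by ring.
apply: Rmult_le_compat; first by rewrite -mult_INR; apply: pos_INR.
- by have := pos_INR j; nra.
- by have := IH (ltnW jq); rewrite mult_INR.
- exact: ratio_step_le.
Qed.

Lemma binomial_ratio_le (q k : nat) : (1 <= q)%nat -> (k <= q.+1)%nat ->
  INR ('C(q.+1, k) * expn q k) <=
  exp (- decay (INR q) (INR k) / (INR q * (INR q + 1) + 1)) * INR 'C((q * q.+1).+1, k).
Proof.
move=> q_ge1 kq; have fact_pos : 0 < INR k`! by apply/lt_0_INR/ltP/fact_gt0.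
apply: (Rmult_le_reg_r _ _ _ fact_pos); rewrite Rmult_assoc -!mult_INR !multE mulnAC !bin_ffact.
exact: ffact_ratio_le.
Qed.

Lemma decay_ge (q k c L : R) : 2 <= k <= q -> 0 <= L ->
  4 * c ^ 2 * ((q + 1) * L) <= (k - 2) ^ 2 ->
  2 * c ^ 2 * L * (q * (q + 1) + 1) <= decay q k.
Proof.
move=> hk hL hcL; rewrite /decay.
have : (k - 2) ^ 2 * (q * (q + 1) + 1) <= 2 * (q + 1) * (k + (q - 1) * k * (k - 1) / 2).
  have : 0 <= (q - k) * (k - 2) * (q + 2) by apply: Rmult_le_pos; [apply: Rmult_le_pos|]; lra.
  nra.
have : 4 * c ^ 2 * ((q + 1) * L) * (q * (q + 1) + 1) <= (k - 2) ^ 2 * (q * (q + 1) + 1).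
  by apply: Rmult_le_compat_r => //; nra.
nra.
Qed.

Lemma sq_sub1_div_lt (q : R) : 0 <= q -> (q ^ 2 - 1) / (q + 2) < q.
Proof.
move=> hq; apply: (Rmult_lt_reg_r (q + 2)); first lra.
rewrite /Rdiv Rmult_assoc Rinv_l; lra.
Qed.

Lemma tail_lt (q k c : R) : 2 <= q -> 1 <= c -> k <= q ->
  2 * c * sqrt ((q + 1) * ln (q + 1)) + 2 <= k ->
  (q * (q + 1) + 1) * exp (- decay q k / (q * (q + 1) + 1)) <
  1 / Rpower (q + 1) (2 * c ^ 2 - 2).
Proof.
move=> hq hc hkq hk; set N := q * (q + 1) + 1; set L := ln (q + 1) in hk *.
have hL : 0 < L by rewrite /L -ln_1; apply: ln_increasing; lra.
have hN : 0 < N by rewrite /N; nra.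
have hsq := sqrt_sqrt ((q + 1) * L) ltac:(nra).
have := sqrt_pos ((q + 1) * L) => hs.
have hdecay : 2 * c ^ 2 * L <= decay q k / N.
  apply/(Rmult_le_reg_r N) => //; rewrite (_ : decay q k / N * N = decay q k); last by field; lra.
  have h2cs : 0 <= 2 * c * sqrt ((q + 1) * L) by apply: Rmult_le_pos; lra.
  apply: decay_ge; [lra | lra | rewrite -hsq; nra].
have -> : 1 / Rpower (q + 1) (2 * c ^ 2 - 2) = (q + 1) ^ 2 * exp (- (2 * c ^ 2 * L)).
  rewrite /Rpower -/L /Rdiv Rmult_1_l -exp_Ropp -[(q + 1) ^ 2]exp_ln; last nra.
  by rewrite -exp_plus ln_pow -?/L; [congr exp; rewrite /=; ring | lra].
apply: Rle_lt_trans (_ : N * exp (- (2 * c ^ 2 * L)) < _).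
  apply/Rmult_le_compat_l; first lra.
  by apply: exp_le; rewrite Rdiv_opp_l; lra.
apply: Rmult_lt_compat_r; [apply: exp_pos | rewrite /N; nra].
Qed.

Lemma ratio_ge (N sat B C t : R) : 0 < C -> 0 <= N ->
  C <= sat + N * B -> B <= t * C -> 1 - N * t <= sat / C.
Proof.
move=> hC hN hsat hB; apply: (Rmult_le_reg_r C) => //.
rewrite /Rdiv Rmult_assoc Rinv_l; last lra.
have : N * B <= N * (t * C) by apply: Rmult_le_compat_l.
nra.
Qed.

End RealBounds.

Theorem theorem2 (P L : finType) (inc : P -> L -> bool)
  (hpp : projective_plane inc) (q : nat) (hord : plane_order inc q)
  (hq : (2 <= q)%nat) (c : R) (hc : (1 <= c)%R) (k : nat)
  (hk1 : (2 * c * sqrt (INR (q + 1) * ln (INR (q + 1))) + 2 <= INR k)%R)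
  (hk2 : (INR k < (INR q ^ 2 - 1) / (INR q + 2))%R) :
  (INR #|[set S : {set P} | (#|S| == k) && saturating inc S]|
     / INR 'C(#|P|, k)
   > 1 - 1 / Rpower (INR (q + 1)) (2 * c ^ 2 - 2))%R.
Proof.
have q_gt0 : (0 < q)%N := ltnW hq.
have [card_P _] := card_points hpp hord q_gt0.
have q_ge2 : (2 <= INR q)%R by apply: (le_INR 2); apply/leP.
have k_lt_q : (INR k < INR q)%R := Rlt_trans _ _ _ hk2 (sq_sub1_div_lt (pos_INR q)).
have kq : (k <= q.+1)%N by apply/(leq_trans _ (leqnSn q))/ltnW/ltP/INR_lt.
have eN : INR (q * q.+1).+1 = (INR q * (INR q + 1) + 1)%R by rewrite S_INR mult_INR S_INR.
have hsat : (INR 'C(#|P|, k) <= INR #|[set S : {set P} | (#|S| == k) && saturating inc S]|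
                + INR #|P| * INR ('C(q.+1, k) * expn q k))%R.
  by rewrite -mult_INR -plus_INR; apply/le_INR/leP/card_saturating_ge.
rewrite -plusE plus_INR INR_1 card_P eN in hk1 hsat *.
apply/Rlt_gt/(Rlt_le_trans _ _ _ _ (ratio_ge _ _ hsat (binomial_ratio_le q_gt0 kq))).
- by have := tail_lt q_ge2 hc (Rlt_le _ _ k_lt_q) hk1; lra.
- by apply/lt_0_INR/ltP; rewrite bin_gt0 (leq_trans kq) // ltnS leq_pmulr.
- nra.
Qed.
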